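(* Let $\Gamma\le\mathrm{Iso}(\mathbb{R}^{r,s})$ be a subgroup whose centralizer in $\mathrm{Iso}(\mathbb{R}^{r,s})$ has an open orbit in $\mathbb{R}^{r,s}$, let $\Delta$ be the center of $\Gamma$ and $U_0=U_\Gamma\cap U_\Gamma^\perp$. Then $\mathbb{R}^{r,s}\supseteq U_\Delta^\perp\supseteq U_0\supseteq\{0\}$, and for every $(I+A,v)\in\Gamma$: $A(\mathbb{R}^{r,s})\subseteq U_\Delta^\perp$, $A(U_\Delta^\perp)\subseteq U_0$, and $A(U_0)=\{0\}$.
   Context: $\mathbb{R}^{r,s}$ denotes $\mathbb{R}^{n}$, $n=r+s$, with a nondegenerate symmetric bilinear form $\langle\cdot,\cdot\rangle$ of signature $(r,s)$; $\mathrm{Iso}(\mathbb{R}^{r,s})$ is its group of affine isometries, whose elements are written $\gamma=(I+A,v)\colon x\mapsto(I+A)x+v$. For a subset $\Lambda$ of $\Gamma$, $U_\Lambda=\sum_{(I+A,v)\in\Lambda}\operatorname{im}A$; $\perp$ denotes orthogonal complement with respect to $\langle\cdot,\cdot\rangle$. Known facts (Wolf) for such $\Gamma$: every $(I+A,v)\in\Gamma$ satisfies $A^2=0$, $Av=0$, $\langle Ax,y\rangle=-\langle x,Ay\rangle$, $\ker A=(\operatorname{im}A)^\perp$, $\operatorname{im}A$ totally isotropic; for $\gamma_i=(I+A_i,v_i)\in\Gamma$ one has $A_1A_2A_3=0$ and $[\gamma_1,\gamma_2]=(I+2A_1A_2,2A_1v_2)$. *)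

From HB Require Import structures.
From mathcomp Require Import all_boot all_order all_algebra.
Set Implicit Arguments. Unset Strict Implicit. Unset Printing Implicit Defensive.
Import Order.TTheory GRing.Theory Num.Theory.
Local Open Scope ring_scope.

Section RrsDefs.
Variables (R : rcfType) (r s : nat).
Local Notation n := (r + s)%N.

Definition gramJ : 'M[R]_n :=
  \matrix_(i, j) (if i == j then (if (i < r)%N then 1 else -1) else 0).

Definition form (x y : 'cV[R]_n) : R := (x^T *m gramJ *m y) 0 0.

(* Affine maps x |-> M x + v, written as pairs (M, v) with M = I + A. *)
Definition aff := ('M[R]_n * 'cV[R]_n)%type.

Definition act (g : aff) (x : 'cV[R]_n) : 'cV[R]_n := g.1 *m x + g.2.

Definition aff_id : aff := (1%:M, 0).
Definition aff_mul (g h : aff) : aff := (g.1 *m h.1, g.1 *m h.2 + g.2).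
Definition aff_inv (g : aff) : aff := (invmx g.1, - (invmx g.1 *m g.2)).

Definition isIso (g : aff) : Prop := g.1^T *m gramJ *m g.1 = gramJ.

Definition is_iso_subgroup (G : aff -> Prop) : Prop :=
  [/\ forall g, G g -> isIso g,
      G aff_id,
      forall g h, G g -> G h -> G (aff_mul g h)
    & forall g, G g -> G (aff_inv g)].

Definition centralizer (G : aff -> Prop) : aff -> Prop :=
  fun c => isIso c /\ forall g, G g -> aff_mul c g = aff_mul g c.

Definition center (G : aff -> Prop) : aff -> Prop :=
  fun c => G c /\ forall g, G g -> aff_mul c g = aff_mul g c.

Definition orbit (C : aff -> Prop) (x0 : 'cV[R]_n) : 'cV[R]_n -> Prop :=
  fun y => exists2 c, C c & y = act c x0.

Definition is_open (S : 'cV[R]_n -> Prop) : Prop :=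
  forall y, S y -> exists2 e : R, 0 < e &
    forall z : 'cV[R]_n, (forall i, `|z i 0 - y i 0| < e) -> S z.

Definition has_open_orbit (C : aff -> Prop) : Prop :=
  exists x0, is_open (orbit C x0).

(* U_L = sum over (I+A, v) in L of im A : the set of finite sums of
   vectors A x with (I + A, v) in L. *)
Definition U_of (L : aff -> Prop) : 'cV[R]_n -> Prop :=
  fun u => exists2 l : seq (aff * 'cV[R]_n),
    (forall p, p \in l -> L p.1) &
    u = \sum_(p <- l) ((p.1.1 - 1%:M) *m p.2).

Definition orth (W : 'cV[R]_n -> Prop) : 'cV[R]_n -> Prop :=
  fun x => forall w, W w -> form x w = 0.

End RrsDefs.

(* Since the centralizer of Gamma has an open orbit and commutes with every
   g = (I + A, v) in Gamma, while acting by isometries, the quadratic function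
   x |-> <Ax + v, Ax + v> is constant on an open set.  Comparing coefficients
   along lines shows that im A is totally isotropic and v is orthogonal to
   im A; with g an isometry this makes A skew-adjoint, A^2 = 0 and Av = 0.
   Applying these facts to g1 g2 and g1 g2^-1 gives, in characteristic 0,
   A1 A2 A1 = 0, A1 A2 = - A2 A1 and A1 A2 A3 = 0, so that the commutator
   [g1, g2] = (I + 2 A1 A2, 2 A1 v2) is central.  Skew-adjointness then turns
   each inclusion into an orthogonality: central elements satisfy A A_c = 0,
   and commutators put the image of A1 A2 inside U_Delta. *)

From Pilot Require Import Defs.
From mathcomp Require Import all_boot all_order all_algebra.
Set Implicit Arguments. Unset Strict Implicit. Unset Printing Implicit Defensive.
Import Order.TTheory GRing.Theory Num.Theory.
Local Open Scope ring_scope.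

Lemma eq0_of_addr_subr_eq0 (V : zmodType) (x y : V) :
  (forall z : V, z + z = 0 -> z = 0) -> x + y = 0 -> - x + y = 0 -> x = 0.
Proof.
move=> double_eq0 /eqP; rewrite addr_eq0 => /eqP ->; rewrite opprK => /double_eq0 ->.
exact: oppr0.
Qed.

Section TwoTorsionFreeRing.
Variable T : pzRingType.
Hypothesis double_eq0 : forall x : T, x + x = 0 -> x = 0.

Lemma sqr_add_add_mul (a b : T) : a * a = 0 -> b * b = 0 ->
  (a + b + a * b) ^+ 2 = (a * b + b * a + a * b * a) + (b * a * b + a * b * a * b).
Proof.
move=> aa0 bb0; have xbb0 x : x * b * b = 0 by rewrite -mulrA bb0 mulr0.
rewrite expr2 !mulrDl !mulrDr !mulrA aa0 xbb0 !mul0r bb0 !addr0 !add0r.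
by rewrite (addrA (a * b)) addrACA.
Qed.

Lemma sqr0_anticomm (a b : T) : a * a = 0 -> b * b = 0 ->
  (a + b + a * b) ^+ 2 = 0 -> (a - b - a * b) ^+ 2 = 0 ->
  a * b * a = 0 /\ a * b = - (b * a).
Proof.
move=> aa0 bb0; rewrite sqr_add_add_mul // => P0.
have nbb0 : - b * - b = 0 by rewrite mulrNN.
rewrite -mulrN (sqr_add_add_mul aa0 nbb0) !(mulrN, mulNr) !opprK -!opprD => Q0.
have sum0 := eq0_of_addr_subr_eq0 double_eq0 P0 Q0.
have aba0 : a * b * a = 0.
  have := congr1 (fun x => a * x) sum0.
  by rewrite /= !mulrDr !mulrA aa0 !mul0r add0r addr0 mulr0.
by split=> //; move/eqP: sum0; rewrite aba0 addr0 addr_eq0 => /eqP.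
Qed.

Lemma anticomm_mul_eq0 (a b c : T) : a * b = - (b * a) -> a * c = - (c * a) ->
  a * (b + c + b * c) = - ((b + c + b * c) * a) -> a * b * c = 0.
Proof.
move=> ab ac e.
have abc : a * (b * c) = - (b * c * a).
  by move: e; rewrite !mulrDr !mulrDl !opprD ab ac => /addrI.
have ca : c * a = - (a * c) by rewrite ac opprK.
have ba : b * a = - (a * b) by rewrite ab opprK.
apply: double_eq0.
by rewrite -{1}mulrA abc -mulrA ca mulrN opprK mulrA ba mulNr addNr.
Qed.

Lemma comm_anticomm_eq0 (a c : T) :
  a * c = c * a -> a * c = - (c * a) -> a * c = 0.
Proof. by move=> e1 e2; apply: double_eq0; rewrite {1}e1 e2 addrN. Qed.

End TwoTorsionFreeRing.

Lemma mulrn2_comm (T : pzRingType) (x c : T) : x * c = 0 -> c * x = 0 ->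
  (1 + x *+ 2) * (c + 1) = (c + 1) * (1 + x *+ 2).
Proof.
move=> xc0 cx0.
have -> : (1 + x *+ 2) * (c + 1) = c + 1 + x *+ 2.
  by rewrite mulrDl mul1r mulrnAl mulrDr xc0 mulr1 add0r.
by rewrite mulrDr mulr1 mulrnAr mulrDl cx0 mul1r add0r.
Qed.

Lemma mulrn2_transl_comm (R : pzRingType) n (x c : 'M[R]_n) (u y : 'cV[R]_n) :
  x *m u = c *m y -> (1 + x *+ 2) *m u + y *+ 2 = (c + 1) *m (y *+ 2) + u.
Proof.
move=> xu; rewrite !mulr2n !mulmxDl !mulmxDr !mul1mx xu.
by rewrite [RHS]addrC !addrA.
Qed.

Lemma double_eq0_num (R : numDomainType) (x : R) : x + x = 0 -> x = 0.
Proof. by move=> /eqP; rewrite -mulr2n mulrn_eq0 => /eqP. Qed.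

Lemma double_eq0_mx (R : numDomainType) m p (x : 'M[R]_(m, p)) :
  x + x = 0 -> x = 0.
Proof.
move=> /matrixP x2; apply/matrixP => i j; rewrite mxE; apply: double_eq0_num.
by have := x2 i j; rewrite !mxE.
Qed.

Lemma quadratic_pm_eq0 (R : numDomainType) (h a b : R) : 0 < h ->
  (forall t, `|t| = h -> t * b + t * (t * a) = 0) -> a = 0 /\ b = 0.
Proof.
move=> h_gt0 vanish.
have := vanish (- h); rewrite normrN gtr0_norm // !mulNr !mulrN opprK => /(_ erefl).
move=> /(eq0_of_addr_subr_eq0 (@double_eq0_num _) (vanish h (gtr0_norm h_gt0))) hb0.
move: (vanish h (gtr0_norm h_gt0)); rewrite hb0 add0r => /eqP.
rewrite !mulf_eq0 (gt_eqF h_gt0) /= => /eqP a0; split=> //.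
by move/eqP: hb0; rewrite mulf_eq0 (gt_eqF h_gt0) => /eqP.
Qed.

Lemma small_multiple (R : numFieldType) n (e : R) (u : 'cV[R]_n) : 0 < e ->
  exists2 h : R, 0 < h & forall i, `|h * u i 0| < e.
Proof.
move=> e_gt0; set S := \sum_(i < n) `|u i 0|.
have S1_gt0 : 0 < 1 + S by apply: ltr_wpDr => //; apply: sumr_ge0.
exists (e / (1 + S)); first by rewrite divr_gt0.
move=> i; rewrite normrM gtr0_norm ?divr_gt0 //.
have uS : `|u i 0| <= S by rewrite /S (bigD1 i) //= ler_wpDr // sumr_ge0.
apply: (le_lt_trans (y := e / (1 + S) * S)); first by rewrite ler_pM2l ?divr_gt0.
rewrite [X in _ < X](_ : e = e / (1 + S) * (1 + S)); last by rewrite divfK ?gt_eqF.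
by rewrite ltr_pM2l ?divr_gt0 // ltrDr ltr01.
Qed.

Lemma col_eq0_dot (R : pzRingType) m (w : 'cV[R]_m) :
  (forall z : 'cV[R]_m, (z^T *m w) 0 0 = 0) -> w = 0.
Proof.
move=> dot0; apply/matrixP => i j; rewrite (ord1 j) mxE.
by have := dot0 (delta_mx i 0); rewrite trmx_delta -rowE mxE.
Qed.

Lemma mx_eq0_bilinear (R : pzRingType) m (N : 'M[R]_m) :
  (forall x y : 'cV[R]_m, (x^T *m N *m y) 0 0 = 0) -> N = 0.
Proof.
move=> bil0; have Ny0 (y : 'cV[R]_m) : N *m y = 0.
  by apply: col_eq0_dot => z; rewrite mulmxA.
apply/matrixP => i j; rewrite mxE.
by have := Ny0 (delta_mx j 0); rewrite -colE => /matrixP /(_ i 0); rewrite !mxE.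
Qed.

(* A bare [form] would resolve to MathComp's sesquilinear [form]. *)
Local Notation form := Defs.form.

Section Form.
Variables (R : rcfType) (r s : nat).
Local Notation n := (r + s)%N.
Local Notation J := (gramJ R r s).

Lemma gramJ_diag : J = diag_mx (\row_(i < n) (if (i < r)%N then 1 else -1)).
Proof.
by apply/matrixP => i j; rewrite !mxE; case: (i == j); rewrite ?mulr1n ?mulr0n.
Qed.

Lemma tr_gramJ : J^T = J.
Proof. by rewrite gramJ_diag tr_diag_mx. Qed.

Lemma gramJ_sqr : J *m J = 1%:M.
Proof.
rewrite gramJ_diag mulmx_diag; apply/matrixP => i j; rewrite !mxE.
by case: (i < r)%N; rewrite ?mulr1 ?mulrNN ?mulr1.
Qed.

Lemma formC (x y : 'cV[R]_n) : form x y = form y x.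
Proof.
have entry_tr (M : 'M[R]_1) : M 0 0 = M^T 0 0 by rewrite mxE.
by rewrite /form [RHS]entry_tr !trmx_mul trmxK tr_gramJ mulmxA.
Qed.

Lemma formDl (x y z : 'cV[R]_n) : form (x + y) z = form x z + form y z.
Proof. by rewrite /form linearD /= !mulmxDl mxE. Qed.

Lemma formDr (x y z : 'cV[R]_n) : form x (y + z) = form x y + form x z.
Proof. by rewrite /form !mulmxDr mxE. Qed.

Lemma formZl k (x z : 'cV[R]_n) : form (k *: x) z = k * form x z.
Proof. by rewrite /form linearZ /= -!scalemxAl mxE. Qed.

Lemma formZr k (x z : 'cV[R]_n) : form x (k *: z) = k * form x z.
Proof. by rewrite /form -scalemxAr mxE. Qed.

Lemma form0l (x : 'cV[R]_n) : form 0 x = 0.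
Proof. by rewrite /form trmx0 !mul0mx mxE. Qed.

Lemma form0r (x : 'cV[R]_n) : form x 0 = 0.
Proof. by rewrite /form mulmx0 mxE. Qed.

Lemma form_sumr (x : 'cV[R]_n) I (l : seq I) (F : I -> 'cV[R]_n) :
  form x (\sum_(i <- l) F i) = \sum_(i <- l) form x (F i).
Proof.
elim: l => [|a l IH]; first by rewrite !big_nil form0r.
by rewrite !big_cons formDr IH.
Qed.

Lemma form_nondeg (y : 'cV[R]_n) : (forall z, form z y = 0) -> y = 0.
Proof.
move=> y_orth; have Jy0 : J *m y = 0.
  by apply: col_eq0_dot => z; rewrite mulmxA; exact: y_orth.
by rewrite -[y]mul1mx -gramJ_sqr -mulmxA Jy0 mulmx0.
Qed.

Lemma form_line (d a : 'cV[R]_n) (t : R) : form (d + t *: a) (d + t *: a) =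
  form d d + (t * (form d a + form a d) + t * (t * form a a)).
Proof. by rewrite !formDl !formDr !formZl !formZr !mulrDr -!addrA. Qed.

Lemma isotropic_image (A : 'M[R]_n) :
  (forall u, form (A *m u) (A *m u) = 0) -> A^T *m J *m A = 0.
Proof.
move=> iso_A; apply: mx_eq0_bilinear => x y.
have -> : x^T *m (A^T *m J *m A) *m y = (A *m x)^T *m J *m (A *m y).
  by rewrite trmx_mul !mulmxA.
change (form (A *m x) (A *m y) = 0).
apply: double_eq0_num; have := iso_A (x + y).
by rewrite mulmxDr formDl !formDr !iso_A add0r addr0 [form (A *m y) _]formC.
Qed.

Lemma skew_sqr0 (A : 'M[R]_n) :
  A^T *m J *m A = 0 -> A^T *m J = - (J *m A) -> A *m A = 0.
Proof.
move=> iso_A skew_A.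
have JAA0 : J *m (A *m A) = 0.
  by rewrite mulmxA -[J *m A]opprK -skew_A mulNmx iso_A oppr0.
by rewrite -[A *m A]mul1mx -gramJ_sqr -mulmxA JAA0 mulmx0.
Qed.

Lemma form_skew (A : 'M[R]_n) x y :
  A^T *m J = - (J *m A) -> form (A *m x) y = - form x (A *m y).
Proof.
move=> skew_A; rewrite /form trmx_mul -(mulmxA x^T) skew_A.
by rewrite mulmxN mulNmx mxE !mulmxA.
Qed.

Lemma skew_ker (A : 'M[R]_n) v :
  A^T *m J = - (J *m A) -> (forall u, form v (A *m u) = 0) -> A *m v = 0.
Proof.
move=> skew_A v_orth; apply: form_nondeg => z.
by rewrite formC form_skew // v_orth oppr0.
Qed.

End Form.

Section AffineIsometries.
Variables (R : rcfType) (r s : nat).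
Local Notation n := (r + s)%N.
Local Notation J := (gramJ R r s).
Implicit Types (g h c : aff R r s) (x y : 'cV[R]_n).

Definition Apart g : 'M[R]_n := g.1 - 1%:M.

Definition disp g x : 'cV[R]_n := act g x - x.

Lemma dispE g x : disp g x = Apart g *m x + g.2.
Proof. by rewrite /disp /act /Apart mulmxBl mul1mx addrAC. Qed.

Lemma act_mul g h x : act (aff_mul g h) x = act g (act h x).
Proof. by rewrite /act /= mulmxDr mulmxA addrA. Qed.

Lemma form_iso c x y : isIso c -> form (c.1 *m x) (c.1 *m y) = form x y.
Proof.
move=> iso_c; rewrite /form trmx_mul -!mulmxA.
by rewrite (mulmxA c.1^T) (mulmxA (c.1^T *m J)) iso_c.
Qed.

Lemma disp_act_comm g c x :
  aff_mul c g = aff_mul g c -> disp g (act c x) = c.1 *m disp g x.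
Proof.
move=> cg; rewrite /disp -act_mul -cg act_mul mulmxBr.
by rewrite {1 3}/act opprD addrACA subrr addr0.
Qed.

Lemma disp_line g x u (t : R) :
  disp g (x + t *: u) = disp g x + t *: (Apart g *m u).
Proof. by rewrite !dispE mulmxDr -scalemxAr addrAC. Qed.

Lemma open_orbit_isotropic (Gamma : aff R r s -> Prop) x0 g u :
  is_open (Defs.orbit (centralizer Gamma) x0) -> Gamma g ->
  form (Apart g *m u) (Apart g *m u) = 0 /\ form (disp g x0) (Apart g *m u) = 0.
Proof.
move=> orbit_open Gg; set d := disp g x0; set a := Apart g *m u.
have x0_orbit : Defs.orbit (centralizer Gamma) x0 x0.
  exists (aff_id R r s); last by rewrite /act /= mul1mx addr0.
  split; first by rewrite /isIso /= trmx1 mul1mx mulmx1.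
  by move=> h _; rewrite /aff_mul /= !mul1mx mulmx1 mulmx0 add0r addr0.
have [e e_gt0 ball_sub] := orbit_open x0 x0_orbit.
have [h h_gt0 small] := small_multiple u e_gt0.
have line t : `|t| = h -> t * (form d a + form a d) + t * (t * form a a) = 0.
  move=> th; have : Defs.orbit (centralizer Gamma) x0 (x0 + t *: u).
    apply: ball_sub => i; rewrite !mxE addrAC subrr add0r normrM th.
    by have := small i; rewrite normrM gtr0_norm.
  case=> c [iso_c cg] xt; have := form_iso d d iso_c.
  rewrite -disp_act_comm ?cg // -xt disp_line form_line.
  by rewrite -[RHS]addr0 => /addrI.
have [aa0 da0] := quadratic_pm_eq0 h_gt0 line.
by split=> //; apply: double_eq0_num; rewrite [X in _ + X]formC.
Qed.

Lemma iso_skew g : isIso g ->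
  (Apart g)^T *m J *m Apart g = 0 -> (Apart g)^T *m J = - (J *m Apart g).
Proof.
have g1 : g.1 = Apart g + 1%:M by rewrite subrK.
rewrite /isIso g1; move: (Apart g) => A.
rewrite [(_ + _)^T]linearD /= trmx1 mulmxDl !mulmxDr !mulmxDl => + iso_A.
rewrite iso_A add0r !mul1mx !mulmx1 addrA -[X in _ = X]add0r => /addIr /eqP.
by rewrite addrC addr_eq0 => /eqP.
Qed.

Lemma open_orbit_unipotent (Gamma : aff R r s -> Prop) g :
  has_open_orbit (centralizer Gamma) -> Gamma g -> isIso g ->
  [/\ Apart g *m Apart g = 0, (Apart g)^T *m J = - (J *m Apart g)
    & Apart g *m g.2 = 0].
Proof.
case=> x0 orbit_open Gg iso_g.
have isotropic u := open_orbit_isotropic u orbit_open Gg.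
have iso_A : (Apart g)^T *m J *m Apart g = 0.
  by apply: isotropic_image => u; case: (isotropic u).
have skew_A := iso_skew iso_g iso_A.
have AA0 := skew_sqr0 iso_A skew_A.
split=> //; apply: skew_ker => // u.
have [_] := isotropic u; rewrite dispE formDl.
by rewrite form_skew // mulmxA AA0 mul0mx form0r oppr0 add0r.
Qed.

Lemma Apart_mul g h : Apart (aff_mul g h) = Apart g + Apart h + Apart g * Apart h.
Proof.
have g1 k : k.1 = Apart k + 1 by rewrite subrK.
rewrite [in LHS]/Apart /aff_mul /= mulmxE (g1 g) (g1 h).
by rewrite mulrDl mulrDr mul1r mulr1 addrA addrK -addrA addrC.
Qed.

Lemma Apart_comm g h :
  aff_mul g h = aff_mul h g -> Apart g * Apart h = Apart h * Apart g.
Proof. by move=> /(congr1 Apart); rewrite !Apart_mul (addrC (Apart g)) => /addrI. Qed.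

Lemma U_of_im (L : aff R r s -> Prop) g x : L g -> U_of L (Apart g *m x).
Proof.
move=> Lg; exists [:: (g, x)]; first by move=> p; rewrite inE => /eqP ->.
by rewrite big_seq1.
Qed.

Lemma U_of0 (L : aff R r s -> Prop) : U_of L 0.
Proof. by exists [::]; rewrite ?big_nil. Qed.

Lemma orth_U_ofP (L : aff R r s -> Prop) y :
  (forall g x, L g -> form y (Apart g *m x) = 0) -> orth (U_of L) y.
Proof.
move=> y_orth _ [l l_sub ->]; rewrite form_sumr big_seq big1 // => p pl.
exact/y_orth/l_sub.
Qed.

Lemma orth_U_of_sub (L L' : aff R r s -> Prop) y :
  (forall g, L g -> L' g) -> orth (U_of L') y -> orth (U_of L) y.
Proof.
by move=> LL' y_orth; apply: orth_U_ofP => g x Lg; apply/y_orth/U_of_im/LL'.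
Qed.

End AffineIsometries.

Section UnipotentPair.
Variables (R : pzRingType) (n : nat) (a b : 'M[R]_n) (v w : 'cV[R]_n).
Hypotheses (aa0 : a * a = 0) (bb0 : b * b = 0).
Hypotheses (av0 : a *m v = 0) (bw0 : b *m w = 0).
Hypotheses (aba0 : a * b * a = 0) (bab0 : b * a * b = 0).
Hypothesis ab_anti : a * b = - (b * a).

Lemma unipotent_transl_mul :
  (a + b + a * b) *m ((a + 1) *m w + v) = a *m w + b *m v + b *m (a *m w).
Proof.
have aax x : a *m (a *m x) = 0 by rewrite mulmxA mulmxE aa0 mul0mx.
have abv0 : a *m (b *m v) = 0.
  by rewrite mulmxA mulmxE ab_anti -mulmxE mulNmx -mulmxA av0 mulmx0 oppr0.
have abax x : a *m (b *m (a *m x)) = 0 by rewrite !mulmxA !mulmxE aba0 mul0mx.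
rewrite -!mulmxE !mulmxDl !mulmxDr -!mulmxA mul1mx aax av0 bw0 abv0 abax mulmx0.
by rewrite !addr0 add0r -addrA (addrC (b *m v)) addrA.
Qed.

Lemma unipotent_comm_lin :
  (a + 1) * (b + 1) * ((1 - a) * (1 - b)) = 1 + (a * b) *+ 2.
Proof.
have xaa x : x * a * a = 0 by rewrite -mulrA aa0 mulr0.
have xbb x : x * b * b = 0 by rewrite -mulrA bb0 mulr0.
have xaba x : x * a * b * a = 0 by rewrite -!mulrA (mulrA a) aba0 mulr0.
have xbab x : x * b * a * b = 0 by rewrite -!mulrA (mulrA b) bab0 mulr0.
rewrite !(mulrDl, mulrDr, mulrBl, mulrBr, mul1r, mulr1, mulrN, mulNr, opprK, mulrA).
rewrite ?(aa0, bb0, aba0, bab0, xaa, xbb, xaba, xbab, mul0r, mulr0, oppr0).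
rewrite ?(subr0, sub0r, addr0, add0r) -ab_anti (addrAC (- (a * b))) addNr add0r.
rewrite addrC !addrA (addrC (- b)) (addrAC (a * b - b)) subrK.
by rewrite (addrAC (a * b) a) (addrAC _ a) addrK (addrC (a * b) 1).
Qed.

Lemma unipotent_comm_transl : b *m v = - (a *m w) -> b *m (a *m w) = 0 ->
  (a + 1) * (b + 1) *m ((1 - a) *m - w + - v) + ((a + 1) *m w + v) = (a *m w) *+ 2.
Proof.
move=> bv baw0.
have aax x : a *m (a *m x) = 0 by rewrite mulmxA mulmxE aa0 mul0mx.
have abv0 : a *m (b *m v) = 0.
  by rewrite mulmxA mulmxE ab_anti -mulmxE mulNmx -mulmxA av0 mulmx0 oppr0.
have abax x : a *m (b *m (a *m x)) = 0 by rewrite !mulmxA !mulmxE aba0 mul0mx.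
have one_mul (x : 'cV[R]_n) : 1 *m x = x := mul1mx x.
rewrite -!mulmxE !(mulmxDl, mulmxDr, mulmxBl, mulmxN, mulNmx, one_mul, opprK) -!mulmxA.
rewrite ?(one_mul, aax, abv0, abax, av0, bw0, baw0, mulmx0, oppr0, addr0, add0r, subr0).
rewrite bv opprK (addrC (- w)) addKr addrACA addrCA (addrCA (- w)) addNr addr0.
by rewrite addrACA addNr addr0 mulr2n.
Qed.

End UnipotentPair.

Section UnipotentGroup.
Variables (R : rcfType) (r s : nat).
Local Notation n := (r + s)%N.
Local Notation J := (gramJ R r s).
Variable Gamma : aff R r s -> Prop.
Hypothesis Gamma_sub : is_iso_subgroup Gamma.
Hypothesis open_orbit : has_open_orbit (centralizer Gamma).
Implicit Types (g h k : aff R r s) (x : 'cV[R]_n).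

Definition aff_comm g h := aff_mul (aff_mul g h) (aff_mul (aff_inv g) (aff_inv h)).

Lemma Gamma_mul g h : Gamma g -> Gamma h -> Gamma (aff_mul g h).
Proof. by case: Gamma_sub => _ _ + _; apply. Qed.

Lemma Gamma_inv g : Gamma g -> Gamma (aff_inv g).
Proof. by case: Gamma_sub => _ _ _; apply. Qed.

Lemma Gamma_unipotent g : Gamma g ->
  [/\ Apart g * Apart g = 0, (Apart g)^T *m J = - (J *m Apart g) & Apart g *m g.2 = 0].
Proof.
move=> Gg; have iso_g : isIso g by case: Gamma_sub => + _ _ _; apply.
by have [] := open_orbit_unipotent open_orbit Gg iso_g; rewrite -mulmxE.
Qed.

Lemma aff_invE g : Gamma g -> aff_inv g = (1 - Apart g, - g.2).
Proof.
move=> Gg; have [AA0 _ Av0] := Gamma_unipotent Gg.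
have g1 : g.1 = Apart g + 1 by rewrite subrK.
have inv_g1 : g.1 * (1 - Apart g) = 1.
  by rewrite g1 mulrBr mulr1 mulrDl mul1r AA0 add0r addrAC subrr add0r.
have [unit_g1 _] := mulmx1_unit inv_g1.
have invE : invmx g.1 = 1 - Apart g.
  by rewrite -[RHS]mul1mx -(mulVmx unit_g1) -mulmxA mulmxE inv_g1 mulr1.
by rewrite /aff_inv invE mulmxBl mul1mx Av0 subr0.
Qed.

Lemma Apart_inv g : Gamma g -> Apart (aff_inv g) = - Apart g.
Proof. by move=> Gg; rewrite aff_invE // /Apart /= addrAC subrr add0r. Qed.

Lemma Apart_anticomm g h : Gamma g -> Gamma h ->
  Apart g * Apart h * Apart g = 0 /\ Apart g * Apart h = - (Apart h * Apart g).
Proof.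
move=> Gg Gh.
have [AA0 _ _] := Gamma_unipotent Gg; have [BB0 _ _] := Gamma_unipotent Gh.
have [P0 _ _] := Gamma_unipotent (Gamma_mul Gg Gh).
have [Q0 _ _] := Gamma_unipotent (Gamma_mul Gg (Gamma_inv Gh)).
rewrite Apart_mul in P0; rewrite Apart_mul Apart_inv // mulrN in Q0.
exact: sqr0_anticomm (@double_eq0_mx R n n) _ _ AA0 BB0 P0 Q0.
Qed.

Lemma Apart_mul3_eq0 g h k : Gamma g -> Gamma h -> Gamma k ->
  Apart g * Apart h * Apart k = 0.
Proof.
move=> Gg Gh Gk.
have [_ ab] := Apart_anticomm Gg Gh; have [_ ac] := Apart_anticomm Gg Gk.
have [_ a_bc] := Apart_anticomm Gg (Gamma_mul Gh Gk); rewrite Apart_mul in a_bc.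
exact: anticomm_mul_eq0 (@double_eq0_mx R n n) _ _ _ ab ac a_bc.
Qed.

Lemma Apart_transl_anticomm g h : Gamma g -> Gamma h ->
  Apart h *m g.2 = - (Apart g *m h.2) /\ Apart h *m (Apart g *m h.2) = 0.
Proof.
move=> Gg Gh; have g1 : g.1 = Apart g + 1 by rewrite subrK.
have [AA0 _ Av0] := Gamma_unipotent Gg; have [BB0 _ Bw0] := Gamma_unipotent Gh.
have [ABA0 AB_anti] := Apart_anticomm Gg Gh.
have [_ _ P0] := Gamma_unipotent (Gamma_mul Gg Gh).
have [_ _ Q0] := Gamma_unipotent (Gamma_mul Gg (Gamma_inv Gh)).
rewrite Apart_mul /aff_mul /= g1 unipotent_transl_mul // in P0.
rewrite Apart_mul Apart_inv // /aff_mul aff_invE //= g1 in Q0.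
have nBw0 : - Apart h *m - h.2 = 0 by rewrite mulmxN mulNmx opprK Bw0.
have nABA0 : Apart g * - Apart h * Apart g = 0 by rewrite mulrN mulNr ABA0 oppr0.
have nAB_anti : Apart g * - Apart h = - (- Apart h * Apart g).
  by rewrite mulrN mulNr AB_anti.
rewrite (unipotent_transl_mul AA0 Av0 nBw0 nABA0 nAB_anti) in Q0.
rewrite !(mulmxN, mulNmx, opprK) in Q0.
have sum0 : Apart g *m h.2 + Apart h *m g.2 = 0.
  by rewrite -opprD in Q0; exact: eq0_of_addr_subr_eq0 (@double_eq0_mx R n 1) P0 Q0.
split; first by apply/eqP; rewrite -addr_eq0 addrC sum0.
by move: P0; rewrite sum0 add0r.
Qed.

Lemma aff_commE g h : Gamma g -> Gamma h ->
  aff_comm g h = (1 + (Apart g * Apart h) *+ 2, (Apart g *m h.2) *+ 2).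
Proof.
move=> Gg Gh; have gE k : k.1 = Apart k + 1 by rewrite subrK.
have [AA0 _ Av0] := Gamma_unipotent Gg; have [BB0 _ Bw0] := Gamma_unipotent Gh.
have [ABA0 AB_anti] := Apart_anticomm Gg Gh; have [BAB0 _] := Apart_anticomm Gh Gg.
have [Bv BAw0] := Apart_transl_anticomm Gg Gh.
rewrite /aff_comm !aff_invE // /aff_mul /= !mulmxE (gE g) (gE h).
by rewrite unipotent_comm_lin // unipotent_comm_transl.
Qed.

Lemma aff_comm_center g h : Gamma g -> Gamma h -> center Gamma (aff_comm g h).
Proof.
move=> Gg Gh; split.
  by rewrite /aff_comm; do 3?apply: Gamma_mul => //; apply: Gamma_inv.
move=> k Gk; have kE : k.1 = Apart k + 1 by rewrite subrK.
have ABC0 := Apart_mul3_eq0 Gg Gh Gk; have CAB0 := Apart_mul3_eq0 Gk Gg Gh.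
have [_ AC_anti] := Apart_anticomm Gg Gk.
have [Bu _] := Apart_transl_anticomm Gk Gh.
have ABu : Apart g * Apart h *m k.2 = Apart k *m (Apart g *m h.2).
  by rewrite -mulmxA Bu mulmxN !mulmxA mulmxE AC_anti mulNmx opprK.
rewrite aff_commE // /aff_mul /= kE mulmxE mulrn2_comm ?mulrA //.
by rewrite (mulrn2_transl_comm ABu).
Qed.

Lemma Apart_center_eq0 g c : Gamma g -> center Gamma c -> Apart g * Apart c = 0.
Proof.
move=> Gg [Gc c_central]; have [_ anti] := Apart_anticomm Gg Gc.
apply: comm_anticomm_eq0 (@double_eq0_mx R n n) _ _ _ anti.
exact/Apart_comm/esym/c_central.
Qed.

Lemma im_Apart_orth_center g x : Gamma g -> orth (U_of (center Gamma)) (Apart g *m x).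
Proof.
move=> Gg; apply: orth_U_ofP => c y Cc; have [_ skew _] := Gamma_unipotent Gg.
by rewrite form_skew // mulmxA mulmxE Apart_center_eq0 // mul0mx form0r oppr0.
Qed.

Lemma orth_center_im_Apart g x : Gamma g ->
  orth (U_of (center Gamma)) x -> orth (U_of Gamma) (Apart g *m x).
Proof.
move=> Gg x_orth; apply: orth_U_ofP => h y Gh; have [_ skew _] := Gamma_unipotent Gg.
have := x_orth _ (U_of_im y (aff_comm_center Gg Gh)).
rewrite aff_commE // /Apart /= addrAC subrr add0r mulr2n mulmxDl formDr.
by rewrite form_skew // mulmxA mulmxE => /double_eq0_num ->; rewrite oppr0.
Qed.

Lemma orth_im_Apart_eq0 g x : Gamma g -> orth (U_of Gamma) x -> Apart g *m x = 0.
Proof.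
move=> Gg x_orth; have [_ skew _] := Gamma_unipotent Gg.
apply: form_nondeg => z; rewrite formC form_skew //.
by rewrite (x_orth _ (U_of_im z Gg)) oppr0.
Qed.

End UnipotentGroup.

Theorem proposition4p3 (R : rcfType) (r s : nat)
  (Gamma : aff R r s -> Prop)
  (hG : is_iso_subgroup Gamma)
  (hopen : has_open_orbit (centralizer Gamma)) :
  let UDp := orth (U_of (center Gamma)) in
  let U0 := fun x => U_of Gamma x /\ orth (U_of Gamma) x in
  [/\ (forall x, U0 x -> UDp x),
      U0 0 &
      forall g, Gamma g ->
        [/\ (forall x, UDp ((g.1 - 1%:M) *m x)),
            (forall x, UDp x -> U0 ((g.1 - 1%:M) *m x)) &
            (forall x, U0 x -> (g.1 - 1%:M) *m x = 0)]].
Proof.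
move=> UDp U0; split.
- by move=> x [_ x_orth]; apply: orth_U_of_sub x_orth => c [].
- by split; [exact: U_of0 | move=> w _; exact: form0l].
move=> g Gg; split.
- by move=> x; exact (im_Apart_orth_center hG hopen x Gg).
- move=> x x_orth; split; first exact: U_of_im.
  exact (orth_center_im_Apart hG hopen Gg x_orth).
- by move=> x [_ x_orth]; exact (orth_im_Apart_eq0 hG hopen Gg x_orth).
Qed.
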